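(* Let $(\mathcal{S},\mathcal{A})$ be a finite directed acyclic graph with a unique initial state $s_0$, a unique sink state $s_f$, and a set of terminating states $\mathcal{X}\subset\mathcal{S}$ (the states having an edge to $s_f$). Let $k\ge 1$ and for each $i\in\{1,\dots,k\}$ let $p_{i,F}$ be a forward policy on this graph whose induced terminating state distribution is $p_i(x)=R_i(x)/Z_i$ for $x\in\mathcal{X}$, where $R_i:\mathcal{X}\to[0,\infty)$ and $Z_i=\sum_{x\in\mathcal{X}}R_i(x)>0$. Let $u_i$ denote the reaching probability under $p_{i,F}$. Let $\omega_1,\dots,\omega_k\ge 0$ and let $\mathcal{G}(a_1,\dots,a_k)=\sum_{i=1}^k\omega_i Z_i a_i$. Define the mixing policy $$p_{M,F}(s'\mid s)=\frac{\mathcal{G}\bigl(u_1(s)p_{1,F}(s'\mid s),\dots,u_k(s)p_{k,F}(s'\mid s)\bigr)}{N_M(s)},\qquad N_M(s)=\sum_{s':(s\to s')\in\mathcal{A}}\mathcal{G}\bigl(u_1(s)p_{1,F}(s'\mid s),\dots,u_k(s)p_{k,F}(s'\mid s)\bigr).$$ Then the terminating state distribution $p_M$ induced by $p_{M,F}$ exactly equals the target distribution $p_M^*$, i.e. $p_M(x)=p_M^*(x)\propto\sum_{i=1}^k\omega_iR_i(x)$ for $x\in\mathcal{X}$.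
   Context: A forward policy $p_F$ assigns to each state $s\neq s_f$ a probability distribution $p_F(\cdot\mid s)$ over the children $s'$ of $s$ (states with $(s\to s')\in\mathcal{A}$). It induces a distribution over complete trajectories $s_0\to s_1\to\cdots\to s_n=x\to s_f$ by multiplying transition probabilities. The reaching probability is $u(s)=\sum_{\tau\in\mathcal{T}_{s_0,s}}\prod_{t=1}^T p_F(s_t\mid s_{t-1})$, where $\mathcal{T}_{s_0,s}$ is the set of paths $s_0\to\cdots\to s_T=s$; equivalently $u(s_0)=1$ and $u(s)=\sum_{s_*:(s_*\to s)\in\mathcal{A}}u(s_* )p_F(s\mid s_* )$. The induced terminating state distribution is $p(x)=u(x)\,p_F(s_f\mid x)$ for $x\in\mathcal{X}$. *)

From HB Require Import structures.
From mathcomp Require Import all_boot all_order all_algebra.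
Set Implicit Arguments. Unset Strict Implicit. Unset Printing Implicit Defensive.
Import Order.TTheory GRing.Theory Num.Theory.
Local Open Scope ring_scope.

Section GFlowNet.
Variables (S : finType) (A : rel S).

Definition acyclic : Prop :=
  forall (s : S) (t : seq S), path A s t -> last s t = s -> t = [::].

Definition unique_initial (s0 : S) : Prop :=
  forall s : S, (forall s' : S, ~~ A s' s) <-> s = s0.

Definition unique_sink (sf : S) : Prop :=
  forall s : S, (forall s' : S, ~~ A s s') <-> s = sf.

Definition terminating (sf : S) : pred S := fun x => A x sf.

Variable R : realFieldType.

Definition forward_policy (sf : S) (pF : S -> S -> R) : Prop :=
  forall s : S, s != sf ->
    [/\ forall s', 0 <= pF s s',
        forall s', ~~ A s s' -> pF s s' = 0
      & \sum_(s' | A s s') pF s s' = 1].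

(* In a DAG on S every path has
   T < #|S| edges, so summing over lengths T < #|S| covers all paths. *)
Definition reach (s0 : S) (pF : S -> S -> R) (s : S) : R :=
  \sum_(n < #|S|) \sum_(t : n.-tuple S | path A s0 t && (last s0 t == s))
     \prod_(i < n) pF (nth s0 (s0 :: t) i) (tnth t i).

Definition term_dist (s0 sf : S) (pF : S -> S -> R) (x : S) : R :=
  reach s0 pF x * pF x sf.

Definition partZ (sf : S) (Rw : S -> R) : R :=
  \sum_(x | terminating sf x) Rw x.

Variable k : nat.

Definition mixG (sf : S) (omega : 'I_k -> R) (Rw : 'I_k -> S -> R)
    (a : 'I_k -> R) : R :=
  \sum_(i < k) omega i * partZ sf (Rw i) * a i.

Definition mixN (s0 sf : S) (omega : 'I_k -> R) (Rw : 'I_k -> S -> R)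
    (pF : 'I_k -> S -> S -> R) (s : S) : R :=
  \sum_(s' | A s s')
     mixG sf omega Rw (fun i => reach s0 (pF i) s * pF i s s').

Definition mix_policy (s0 sf : S) (omega : 'I_k -> R) (Rw : 'I_k -> S -> R)
    (pF : 'I_k -> S -> S -> R) (s s' : S) : R :=
  mixG sf omega Rw (fun i => reach s0 (pF i) s * pF i s s')
  / mixN s0 sf omega Rw pF s.

End GFlowNet.

From HB Require Import structures.
From mathcomp Require Import all_boot all_order all_algebra.
Import Order.TTheory GRing.Theory Num.Theory.
Local Open Scope ring_scope.
Set Implicit Arguments. Unset Strict Implicit. Unset Printing Implicit Defensive.

(** Mix the flows rather than the policies.  With [u_i] the reaching
    probabilities, [F(s) = sum_i omega_i Z_i u_i(s)] is the mixed state flow and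
    [F(s -> s') = sum_i omega_i Z_i u_i(s) p_i(s'|s)] the mixed edge flow.  As
    every [p_i(.|s)] sums to one, the normaliser [N_M(s)] is [F(s)], so
    [F(s -> s') = F(s) p_M(s'|s)], and [F] satisfies the backward recursion
    [F(s) = [s = s0] F(s0) + sum_(t -> s) F(t) p_M(s|t)] that also characterises
    [F(s0) u_M].  On a DAG this recursion has a unique solution, whence
    [F = F(s0) u_M] and [p_M(x) = u_M(x) p_M(sf|x) = F(x -> sf) / F(s0)].  Finally
    [F(x -> sf) = sum_i omega_i R_i(x)] because [u_i(x) p_i(sf|x) = R_i(x) / Z_i],
    and [F(s0) = sum_i omega_i Z_i] because [u_i(s0) = 1]. *)

Section AcyclicRecursion.
Variables (S : finType) (A : rel S).
Hypothesis acyclicA : acyclic A.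

Lemma acyclic_path_uniq (a : S) (t : seq S) : path A a t -> uniq (a :: t).
Proof.
elim: t a => [//|b t IH] a pat; rewrite cons_uniq IH ?andbT; last by case/andP: pat.
apply/negP => a_in; move: pat; case/path.splitP: a_in => p1 p2.
rewrite cat_path => /andP[pa _].
by have := acyclicA pa; rewrite last_rcons => /(_ erefl); case: p1 {pa}.
Qed.

Lemma acyclic_path_size (a : S) (t : seq S) : path A a t -> (size t < #|S|)%N.
Proof.
move=> /acyclic_path_uniq/card_uniqP card_at.
by have := max_card (mem (a :: t)); rewrite card_at.
Qed.

Lemma acyclic_wf : well_founded (fun t s => A t s).
Proof.
suff acc_bounded n s : (forall a t, path A a t -> last a t = s -> size t < n)%N ->
    Acc (fun t s => A t s) s.
  by move=> s; apply: (acc_bounded #|S|) => a t /acyclic_path_size.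
elim: n s => [|n IH] s short; first by have := short s [::] erefl erefl.
constructor=> t ats; apply: IH => a p pat last_p.
have := short a (rcons p s).
by rewrite size_rcons last_rcons rcons_path pat last_p ats; apply.
Qed.

Lemma backward_recursion_unique (R : pzSemiRingType) (b : S -> R)
    (q : S -> S -> R) (f g : S -> R) :
  (forall s, f s = b s + \sum_(t | A t s) f t * q t s) ->
  (forall s, g s = b s + \sum_(t | A t s) g t * q t s) ->
  f =1 g.
Proof.
move=> f_rec g_rec; elim/(well_founded_ind acyclic_wf) => s IH.
by rewrite f_rec g_rec; congr (_ + _); apply: eq_bigr => t /IH ->.
Qed.

End AcyclicRecursion.

Lemma sum_tuple_cons (R : nmodType) (T : finType) n (F : n.+1.-tuple T -> R) :
  \sum_(t : n.+1.-tuple T) F t = \sum_(x : T) \sum_(t : n.-tuple T) F [tuple of x :: t].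
Proof.
rewrite pair_big (reindex (fun p : T * n.-tuple T => [tuple of p.1 :: p.2])) //=.
exists (fun t => (thead t, [tuple of behead t])) => [[x t] _ | t _].
  by congr (_, _); apply: val_inj.
by apply: val_inj; rewrite /= [in RHS](tuple_eta t).
Qed.

Section ReachingProbability.
Variables (S : finType) (A : rel S) (R : realFieldType).
Implicit Types (q : S -> S -> R) (a s : S).

Fixpoint path_weight q a (t : seq S) : R :=
  if t is x :: t' then q a x * path_weight q x t' else 1.

Lemma prod_path_weight q a n (t : n.-tuple S) :
  \prod_(i < n) q (nth a (a :: t) i) (tnth t i) = path_weight q a t.
Proof.
elim: n a t => [|n IH] a t; first by rewrite tuple0 big_ord0.
case/tupleP: t => x t; rewrite big_ord_recl tnth0 /= -IH.
congr (_ * _); apply: eq_bigr => i _; rewrite tnthS /=.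
by rewrite (@set_nth_default _ _ x a) //= size_tuple add0n ltnS ltnW.
Qed.

Definition reach_len q a n s : R :=
  \sum_(t : n.-tuple S | path A a t && (last a t == s)) path_weight q a t.

Lemma reach_len_sum q s0 s : reach A s0 q s = \sum_(n < #|S|) reach_len q s0 n s.
Proof. by apply: eq_bigr => n _; apply: eq_bigr => t _; rewrite prod_path_weight. Qed.

Lemma reach_len0 q a s : reach_len q a 0 s = (s == a)%:R.
Proof.
rewrite /reach_len big_mkcond (big_pred1 [tuple]) => [|t]; last by rewrite [t]tuple0 /= eqxx.
by rewrite /= eq_sym; case: eqP.
Qed.

Lemma reach_lenSl q a n s :
  reach_len q a n.+1 s = \sum_(x | A a x) q a x * reach_len q x n s.
Proof.
rewrite /reach_len big_mkcond sum_tuple_cons [RHS]big_mkcond.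
apply: eq_bigr => x _ /=; case: (A a x) => /=; last by rewrite big1.
by rewrite mulr_sumr [RHS]big_mkcond; apply: eq_bigr => t _; case: ifP.
Qed.

Lemma reach_lenSr q a n s :
  reach_len q a n.+1 s = \sum_(t | A t s) reach_len q a n t * q t s.
Proof.
elim: n a s => [|n IH] a s.
  rewrite reach_lenSl (eq_bigr _ (fun x _ => congr1 _ (reach_len0 q x s))).
  rewrite (eq_bigr _ (fun t _ => congr1 (fun r => r * _) (reach_len0 q a t))).
  rewrite big_mkcond (bigD1 s) //= big1 => [|t /negbTE nts]; last first.
    by rewrite eq_sym nts; case: ifP; rewrite ?mulr0.
  rewrite [RHS]big_mkcond (bigD1 a) //= big1 => [|t /negbTE nta]; last first.
    by rewrite nta; case: ifP; rewrite ?mul0r.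
  by rewrite !eqxx !addr0 mulr1 mul1r.
rewrite reach_lenSl (eq_bigr _ (fun x _ => congr1 _ (IH x s))).
under eq_bigr do rewrite mulr_sumr.
rewrite exchange_big /=; apply: eq_bigr => t _.
by rewrite reach_lenSl mulr_suml; apply: eq_bigr => x _; rewrite mulrA.
Qed.

Hypothesis acyclicA : acyclic A.

Lemma reach_len_eq0 q a n s : (#|S| <= n)%N -> reach_len q a n s = 0.
Proof.
move=> long; apply: big1 => t /andP[/acyclic_path_size] /(_ acyclicA).
by rewrite size_tuple ltnNge long.
Qed.

Lemma reach_rec q s0 s :
  reach A s0 q s = (s == s0)%:R + \sum_(t | A t s) reach A s0 q t * q t s.
Proof.
have -> : reach A s0 q s = \sum_(n < #|S|.+1) reach_len q s0 n s.
  by rewrite big_ord_recr /= reach_len_eq0 // addr0 reach_len_sum.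
rewrite big_ord_recl reach_len0.
congr (_ + _); under eq_bigr do rewrite lift0 reach_lenSr.
rewrite exchange_big; apply: eq_bigr => t _.
by rewrite reach_len_sum mulr_suml.
Qed.

Lemma reach_ge0 q s0 s : (forall a b, A a b -> 0 <= q a b) -> 0 <= reach A s0 q s.
Proof.
move=> q_ge0; elim/(well_founded_ind (acyclic_wf acyclicA)): s => s IH.
by rewrite reach_rec addr_ge0 ?ler0n ?sumr_ge0 // => t ats; rewrite mulr_ge0 ?IH ?q_ge0.
Qed.

Lemma reach_init q s0 : (forall t, ~~ A t s0) -> reach A s0 q s0 = 1.
Proof. by move=> no_pred; rewrite reach_rec eqxx big_pred0 ?addr0 // => t; apply/negbTE. Qed.

End ReachingProbability.

Section MixturePolicy.
Variables (R : realFieldType) (S : finType) (A : rel S) (s0 sf : S) (k : nat)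
  (pF : 'I_k -> S -> S -> R) (Rw : 'I_k -> S -> R) (omega : 'I_k -> R).
Hypotheses (acyclicA : acyclic A) (initial_s0 : unique_initial A s0)
  (sink_sf : unique_sink A sf) (policy_pF : forall i, forward_policy A sf (pF i))
  (partZ_gt0 : forall i, 0 < partZ A sf (Rw i)) (omega_ge0 : forall i, 0 <= omega i).

Local Notation u i := (reach A s0 (pF i)).
Local Notation pM := (mix_policy A s0 sf omega Rw pF).

Definition mix_flow (s : S) : R := mixG A sf omega Rw (fun i => u i s).

Definition mix_edge_flow (s s' : S) : R :=
  mixG A sf omega Rw (fun i => u i s * pF i s s').

Lemma edge_source_neq_sink s s' : A s s' -> s != sf.
Proof. by move=> ass'; apply/eqP => /(proj2 (sink_sf s))/(_ s'); rewrite ass'. Qed.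

Lemma reach_init_pF i : u i s0 = 1.
Proof. exact/(reach_init acyclicA)/(proj2 (initial_s0 s0)). Qed.

Lemma mix_edge_flow_ge0 s s' : s != sf -> 0 <= mix_edge_flow s s'.
Proof.
move=> s_neq; apply: sumr_ge0 => i _; have [pF_ge0 _ _] := policy_pF i s_neq.
have u_ge0 : 0 <= u i s.
  apply: reach_ge0 => // a b /edge_source_neq_sink a_neq.
  by case: (policy_pF i a_neq).
by rewrite !mulr_ge0 // ltW.
Qed.

Lemma mixN_flow s : s != sf -> mixN A s0 sf omega Rw pF s = mix_flow s.
Proof.
move=> s_neq; rewrite /mixN /mixG exchange_big; apply: eq_bigr => i _.
by rewrite -!mulr_sumr; case: (policy_pF i s_neq) => _ _ ->; rewrite mulr1.
Qed.

Lemma mix_policyE s s' : s != sf -> pM s s' = mix_edge_flow s s' / mix_flow s.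
Proof. by move=> s_neq; rewrite /mix_policy mixN_flow. Qed.

Lemma mix_edge_flowE s s' : s != sf -> mix_edge_flow s s' = mix_flow s * pM s s'.
Proof.
move=> s_neq; rewrite mix_policyE //.
have [F0|F_neq0] := eqVneq (mix_flow s) 0; last by rewrite mulrC divfK.
(* Then [pM s s'] divides by zero, but the edge flows out of [s] are
   nonnegative with sum [mix_flow s = 0], so they vanish as well. *)
rewrite F0 mul0r; have [ass'|nass'] := boolP (A s s').
  have : mixN A s0 sf omega Rw pF s = 0 by rewrite mixN_flow.
  by move/psumr_eq0P; apply=> // t _; apply: mix_edge_flow_ge0.
apply: big1 => i _; have [_ pF0 _] := policy_pF i s_neq.
by rewrite pF0 // !mulr0.
Qed.

Lemma mix_flow_rec s :
  mix_flow s = (s == s0)%:R * mix_flow s0 + \sum_(t | A t s) mix_flow t * pM t s.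
Proof.
under [in RHS]eq_bigr => t ats do rewrite -(mix_edge_flowE s (edge_source_neq_sink ats)).
rewrite /mix_flow /mix_edge_flow /mixG exchange_big mulr_sumr -big_split /=.
apply: eq_bigr => i _; rewrite reach_init_pF mulr1 [in LHS]reach_rec //.
by rewrite mulrDr -!mulr_sumr mulrC.
Qed.

Lemma reach_mix_policy s : reach A s0 pM s * mix_flow s0 = mix_flow s.
Proof.
apply: (backward_recursion_unique acyclicA
  (f := fun s => reach A s0 pM s * mix_flow s0) _ mix_flow_rec) => {}s.
by rewrite reach_rec // mulrDl mulr_suml; congr (_ + _); apply: eq_bigr => t _; rewrite mulrAC.
Qed.

Lemma mix_flow_init :
  mix_flow s0 = \sum_(y | terminating A sf y) \sum_(i < k) omega i * Rw i y.
Proof.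
rewrite exchange_big; apply: eq_bigr => i _.
by rewrite reach_init_pF mulr1 /partZ mulr_sumr.
Qed.

Hypothesis term_dist_pF : forall i x, terminating A sf x ->
  term_dist A s0 sf (pF i) x = Rw i x / partZ A sf (Rw i).

Lemma mix_edge_flow_terminal x :
  terminating A sf x -> mix_edge_flow x sf = \sum_(i < k) omega i * Rw i x.
Proof.
move=> x_term; apply: eq_bigr => i _; rewrite [_ * pF i x sf]term_dist_pF //.
by rewrite -mulrA [_ * (_ / _)]mulrC divfK // gt_eqF.
Qed.

End MixturePolicy.

Theorem proposition4p1 (R : realFieldType) (S : finType) (A : rel S)
  (s0 sf : S) (k : nat) (pF : 'I_k -> S -> S -> R) (Rw : 'I_k -> S -> R)
  (omega : 'I_k -> R) :
  acyclic A -> unique_initial A s0 -> unique_sink A sf ->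
  (0 < k)%N ->
  (forall i, forward_policy A sf (pF i)) ->
  (forall i x, terminating A sf x -> 0 <= Rw i x) ->
  (forall i, 0 < partZ A sf (Rw i)) ->
  (forall i x, terminating A sf x ->
     term_dist A s0 sf (pF i) x = Rw i x / partZ A sf (Rw i)) ->
  (forall i, 0 <= omega i) ->
  forall x, terminating A sf x ->
    term_dist A s0 sf (mix_policy A s0 sf omega Rw pF) x
    = (\sum_(i < k) omega i * Rw i x)
      / (\sum_(y | terminating A sf y) \sum_(i < k) omega i * Rw i y).
Proof.
move=> acyclicA initial_s0 sink_sf _ policy_pF _ partZ_gt0 term_dist_pF omega_ge0 x x_term.
have x_neq_sf := edge_source_neq_sink sink_sf x_term.
have reach_mix := reach_mix_policy acyclicA initial_s0 sink_sf policy_pF partZ_gt0 omega_ge0.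
rewrite -(mix_flow_init _ pF _ _ acyclicA initial_s0).
rewrite -(mix_edge_flow_terminal _ _ term_dist_pF x_term) // /term_dist.
have [F0|F0_neq0] := eqVneq (mix_flow A s0 sf pF Rw omega s0) 0.
  (* All weights degenerate: both sides are [0], using [x / 0 = 0]. *)
  by rewrite mix_policyE // -reach_mix F0 !mulr0 invr0 !mulr0.
by rewrite mix_edge_flowE // -reach_mix mulrAC mulfK.
Qed.
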